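(* Let $\mathcal{C}$ be a class of instances and let $K\in\{\mathbb{B},\mathbb{N}\}$. Then $\mathcal{C}$ admits a left query algorithm over $K$ if and only if $\mathcal{C}$ admits a left query algorithm $(\mathcal{F},X)$ over $K$ in which every instance in $\mathcal{F}$ is connected.
   Context: A schema is a finite set of relation symbols, each with a positive arity. An instance $A$ over a schema $\sigma$ assigns to each $R\in\sigma$ of arity $r$ a finite $r$-ary relation $R^A$; its facts are the tuples in these relations, and $\mathrm{adom}(A)$ is the set of elements occurring in its facts. A homomorphism $h:A\to B$ is a map $h:\mathrm{adom}(A)\to\mathrm{adom}(B)$ such that $(a_1,\dots,a_r)\in R^A$ implies $(h(a_1),\dots,h(a_r))\in R^B$ for every $R\in\sigma$; we write $A\to B$ if one exists. A class of instances is a collection of instances over a fixed schema that is closed under isomorphism. $\mathbb{N}$ is the semiring of non-negative integers and $\mathbb{B}$ the Boolean semiring on $\{0,1\}$. $\hom_{\mathbb{N}}(A,B)$ is the number of homomorphisms from $A$ to $B$; $\hom_{\mathbb{B}}(A,B)=1$ if $A\to B$ and $0$ otherwise. For a finite set $\mathcal{F}=\{F_1,\dots,F_k\}$ of instances, $\hom_K(\mathcal{F},A)=(\hom_K(F_1,A),\dots,\hom_K(F_k,A))$ and $\hom_K(A,\mathcal{F})=(\hom_K(A,F_1),\dots,\hom_K(A,F_k))$. A left $k$-query algorithm over $K$ for $\mathcal{C}$ is a pair $(\mathcal{F},X)$ with $\mathcal{F}$ a set of $k$ instances and $X$ a set of $k$-tuples over $K$ (no effectiveness required) such that for every instance $D$: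 $D\in\mathcal{C}$ iff $\hom_K(\mathcal{F},D)\in X$. A right $k$-query algorithm is defined the same way using $\hom_K(D,\mathcal{F})$. $\mathcal{C}$ admits a left (right) query algorithm over $K$ if it has a left (right) $k$-query algorithm over $K$ for some $k>0$. The incidence multigraph of $A$ is the bipartite multigraph with parts $\mathrm{adom}(A)$ and $\{(R,t): R\in\sigma, t\in R^A\}$, with an edge $(a,(R,t))$ for each occurrence of $a$ as an entry of $t$. A path in $A$ is a sequence $a_0,\dots,a_n$ of elements such that there are $b_1,\dots,b_n$ with $a_0,b_1,a_1,\dots,b_n,a_n$ a path in the incidence multigraph (not traversing an edge twice in succession in opposite directions); $A$ is connected if any two elements of $\mathrm{adom}(A)$ are joined by a path. *)

From mathcomp Require Import all_boot.
From Stdlib Require List.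
Set Implicit Arguments. Unset Strict Implicit. Unset Printing Implicit Defensive.

(* An instance over (S, ar): for each symbol R a finite ar R-ary relation
   over the element universe nat, given as a finite list of tuples
   (the relation is the set of listed tuples). *)
Definition instance (S : finType) (ar : S -> nat) :=
  forall R : S, seq ((ar R).-tuple nat).

Section Inst.
Variables (S : finType) (ar : S -> nat).

(* active domain (as a list, possibly with repetitions) *)
Definition adom (A : instance ar) : seq nat :=
  flatten [seq flatten [seq val t | t <- A R] | R <- enum S].

Definition is_homb (A B : instance ar) (h : nat -> nat) : bool :=
  [forall R : S, all (fun t => map_tuple h t \in B R) (A R)].

(* maps adom A -> adom B, encoded via the duplicate-free lists of the
   active domains *)
Definition hom_of (dA dB : seq nat)
  (g : {ffun 'I_(size dA) -> 'I_(size dB)}) (x : nat) : nat :=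
  if (insub (index x dA) : option 'I_(size dA)) is Some i
  then nth 0 dB (g i) else x.

Definition hom_count (A B : instance ar) : nat :=
  #|[pred g : {ffun 'I_(size (undup (adom A))) -> 'I_(size (undup (adom B)))}
       | is_homb A B (hom_of g)]|.

Inductive semiring := SB | SN.

(* hom_K(A,B); Boolean values 0/1 are encoded as the naturals 0/1 *)
Definition homK (K : semiring) (A B : instance ar) : nat :=
  match K with
  | SB => (0 < hom_count A B)
  | SN => hom_count A B
  end.

Definition isomorphic (A B : instance ar) : Prop :=
  exists f g : nat -> nat,
    is_homb A B f /\ is_homb B A g /\
    {in adom A, cancel f g} /\ {in adom B, cancel g f}.

Definition iso_closed (C : instance ar -> Prop) : Prop :=
  forall A B, isomorphic A B -> C A -> C B.

(* connectivity via paths in the incidence multigraph: consecutive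
   elements a_{i-1}, a_i occur in a common fact b_i *)
Definition cooccur (A : instance ar) (x y : nat) : Prop :=
  exists R : S, exists t, t \in A R /\ x \in val t /\ y \in val t.

Inductive linked (A : instance ar) : nat -> nat -> Prop :=
  | linked0 a : linked A a a
  | linkedS a b c : cooccur A a b -> linked A b c -> linked A a c.

Definition connected (A : instance ar) : Prop :=
  forall a b, a \in adom A -> b \in adom A -> linked A a b.

Definition left_query_alg (K : semiring) (C : instance ar -> Prop)
  (F : seq (instance ar)) (X : seq nat -> Prop) : Prop :=
  forall D : instance ar, C D <-> X [seq homK K A D | A <- F].

Definition admits_left (K : semiring) (C : instance ar -> Prop) : Prop :=
  exists (F : seq (instance ar)) (X : seq nat -> Prop),
    0 < size F /\ left_query_alg K C F X.

Definition admits_left_connected (K : semiring) (C : instance ar -> Prop) : Prop :=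
  exists (F : seq (instance ar)) (X : seq nat -> Prop),
    0 < size F /\ (forall A, List.In A F -> connected A) /\ left_query_alg K C F X.

End Inst.

From mathcomp Require Import all_boot.
From Stdlib Require Import Classical ClassicalEpsilon.
Set Implicit Arguments. Unset Strict Implicit. Unset Printing Implicit Defensive.

(* Every instance A has a decomposition into connected instances B_1, ..., B_m
   (m >= 1) with hom_N(A, D) = prod_i hom_N(B_i, D) for all D; consequently
   hom_B(A, D) = 1 iff hom_B(B_i, D) = 1 for all i.  Given a left query
   algorithm (F, X), replace each A in F by its components; the old vector of
   homomorphism values is recovered from the new one block by block
   (products over N, conjunctions over B), so X composed with this
   reconstruction is a left query algorithm using connected instances only. *)

Local Notation map_on d e := {ffun 'I_(size d) -> 'I_(size e)}.

Lemma hom_of_nth (d e : seq nat) (g : map_on d e) (i : 'I_(size d)) :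
  uniq d -> hom_of g (nth 0 d i) = nth 0 e (g i).
Proof.
move=> ud; rewrite /hom_of index_uniq // insubT //= => lt_i.
by congr (nth 0 e (g _)); apply: val_inj.
Qed.

Lemma hom_of_in (d e : seq nat) (g : map_on d e) x :
  x \in d -> hom_of g x \in e.
Proof. by move=> xd; rewrite /hom_of insubT ?index_mem //= => lt_x; apply: mem_nth. Qed.

Lemma hom_of_inj (d e : seq nat) (g g' : map_on d e) :
  uniq d -> uniq e -> {in d, hom_of g =1 hom_of g'} -> g = g'.
Proof.
move=> ud ue eq_gg'; apply/ffunP => i.
have := eq_gg' _ (mem_nth 0 (ltn_ord i)); rewrite !hom_of_nth //.
by move/eqP; rewrite nth_uniq // => /eqP; apply: val_inj.
Qed.

Lemma hom_of_exists (d e : seq nat) (h : nat -> nat) :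
  uniq d -> {in d, forall x, h x \in e} ->
  exists g : map_on d e, {in d, hom_of g =1 h}.
Proof.
move=> ud hde.
have : forall i : 'I_(size d), exists j : 'I_(size e), nth 0 e j = h (nth 0 d i).
  move=> i; have hi := hde _ (mem_nth 0 (ltn_ord i)).
  have lt_idx : index (h (nth 0 d i)) e < size e by rewrite index_mem.
  by exists (Ordinal lt_idx); rewrite /= nth_index.
case/fin_all_exists => f hf; exists (finfun f) => x xd.
have lt_x : index x d < size d by rewrite index_mem.
have -> : x = nth 0 d (Ordinal lt_x) by rewrite /= nth_index.
by rewrite hom_of_nth // ffunE hf.
Qed.

Section DisjointCover.
Variables d d1 d2 e : seq nat.
Hypotheses (ud : uniq d) (ud1 : uniq d1) (ud2 : uniq d2) (ue : uniq e).
Hypotheses (sub1 : {subset d1 <= d}) (sub2 : {subset d2 <= d}).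
Hypothesis cover : forall x, x \in d -> (x \in d1) || (x \in d2).
Hypothesis disj : forall x, x \in d1 -> x \in d2 -> False.

Definition restr (g : map_on d e) : option (map_on d1 e * map_on d2 e) :=
  [pick p | all (fun x => hom_of p.1 x == hom_of g x) d1
         && all (fun x => hom_of p.2 x == hom_of g x) d2].

Lemma restrE (g : map_on d e) (g1 : map_on d1 e) (g2 : map_on d2 e) :
  {in d1, hom_of g1 =1 hom_of g} -> {in d2, hom_of g2 =1 hom_of g} ->
  restr g = Some (g1, g2).
Proof.
move=> eq1 eq2; rewrite /restr; case: pickP => [[p1 p2] /= /andP[/allP e1 /allP e2]|none].
  congr (Some (_, _)); apply: hom_of_inj => // x xd.
    by rewrite eq1 //; apply/eqP/e1.
  by rewrite eq2 //; apply/eqP/e2.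
have all1 : all (fun x => hom_of g1 x == hom_of g x) d1 by apply/allP => x xd; rewrite eq1.
have all2 : all (fun x => hom_of g2 x == hom_of g x) d2 by apply/allP => x xd; rewrite eq2.
by move: (none (g1, g2)); rewrite /= all1 all2.
Qed.

Lemma restrP (g : map_on d e) :
  exists p, restr g = Some p /\
    {in d1, hom_of p.1 =1 hom_of g} /\ {in d2, hom_of p.2 =1 hom_of g}.
Proof.
have [g1 eq1] := hom_of_exists ud1 (fun x xd => hom_of_in g (sub1 xd)).
have [g2 eq2] := hom_of_exists ud2 (fun x xd => hom_of_in g (sub2 xd)).
by exists (g1, g2); rewrite (restrE eq1 eq2).
Qed.

Lemma restr_inj : injective restr.
Proof.
move=> g g' eq_r; have [p [rp [p1 p2]]] := restrP g.
have [p' [rp' [p1' p2']]] := restrP g'.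
move: eq_r; rewrite rp rp' => -[eq_p]; subst p'.
apply: hom_of_inj => // x /cover/orP[x1|x2]; first by rewrite -p1 // p1'.
by rewrite -p2 // p2'.
Qed.

Lemma glue (g1 : map_on d1 e) (g2 : map_on d2 e) :
  exists g : map_on d e, restr g = Some (g1, g2).
Proof.
pose h x := if x \in d1 then hom_of g1 x else hom_of g2 x.
have [g eq_g] : exists g : map_on d e, {in d, hom_of g =1 h}.
  apply: hom_of_exists => // x xd; rewrite /h.
  by case: ifP => x1; apply: hom_of_in => //; case/orP: (cover xd); rewrite ?x1.
exists g; apply: restrE => x xd.
  by rewrite eq_g ?sub1 // /h xd.
rewrite eq_g ?sub2 // /h; case: ifP => // x1; case: (disj x1 xd).
Qed.

Lemma count_split (P1 P2 : (nat -> nat) -> bool) :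
  (forall h h', {in d1, h =1 h'} -> P1 h = P1 h') ->
  (forall h h', {in d2, h =1 h'} -> P2 h = P2 h') ->
  #|[pred g : map_on d e | P1 (hom_of g) && P2 (hom_of g)]| =
  #|[pred g : map_on d1 e | P1 (hom_of g)]| * #|[pred g : map_on d2 e | P2 (hom_of g)]|.
Proof.
move=> ext1 ext2.
pose T1 := [set g : map_on d1 e | P1 (hom_of g)].
pose T2 := [set g : map_on d2 e | P2 (hom_of g)].
pose SS := [set g : map_on d e | P1 (hom_of g) && P2 (hom_of g)].
have im_SS : restr @: SS = Some @: setX T1 T2.
  apply/setP => o; apply/imsetP/imsetP.
    case=> g; rewrite inE => /andP[Pg1 Pg2] ->.
    have [p [-> [p1 p2]]] := restrP g; exists p => //.
    by rewrite !inE (ext1 _ _ p1) (ext2 _ _ p2) Pg1 Pg2.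
  case=> -[g1 g2]; rewrite !inE /= => /andP[Pg1 Pg2] ->.
  have [g rg] := glue g1 g2; exists g => //.
  have [p [rp [p1 p2]]] := restrP g; move: rp; rewrite rg => -[eq_p]; subst p.
  by rewrite inE -(ext1 _ _ p1) -(ext2 _ _ p2) Pg1 Pg2.
rewrite -[LHS]cardsE -(card_imset _ restr_inj) im_SS card_imset; last by move=> ? ? [].
by rewrite cardsX !cardsE.
Qed.

End DisjointCover.

Section Instances.
Variables (S : finType) (ar : S -> nat).
Implicit Types (A B D : instance ar).

Lemma mem_adom A x : x \in adom A <-> exists R t, t \in A R /\ x \in val t.
Proof.
rewrite /adom; split.
  by case/flattenP => s /mapP[R _ ->] /flattenP[s' /mapP[t tA ->] xt]; exists R, t.
case=> R [t [tA xt]]; apply/flattenP; exists (flatten [seq val t | t <- A R]).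
  by apply/mapP; exists R; rewrite ?mem_enum.
by apply/flattenP; exists (val t) => //; apply/mapP; exists t.
Qed.

Lemma is_homb_ext A D h h' :
  {in adom A, h =1 h'} -> is_homb A D h = is_homb A D h'.
Proof.
move=> eq_h; apply: eq_forallb => R; apply: eq_in_all => t tA.
suff -> : map_tuple h t = map_tuple h' t by [].
apply: val_inj; apply/eq_in_map => x xt.
by apply: eq_h; apply/mem_adom; exists R, t.
Qed.

Definition sub_instance A (p : pred (seq nat)) : instance ar :=
  fun R => filter (fun t => p (val t)) (A R).

Lemma adom_sub_instance A p x : x \in adom (sub_instance A p) -> x \in adom A.
Proof.
case/mem_adom => R [t [tA xt]]; apply/mem_adom; exists R, t.
by move: tA; rewrite mem_filter => /andP[].
Qed.

Lemma adom_sub_instance_cover A p x :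
  x \in adom A ->
  (x \in adom (sub_instance A p)) || (x \in adom (sub_instance A (predC p))).
Proof.
case/mem_adom => R [t [tA xt]]; apply/orP; case pt: (p (val t)); [left | right];
  by apply/mem_adom; exists R, t; rewrite mem_filter /= pt.
Qed.

Lemma is_homb_split A D p h :
  is_homb A D h = is_homb (sub_instance A p) D h && is_homb (sub_instance A (predC p)) D h.
Proof.
have all_filterC (T : eqType) (q f : pred T) s :
    all f s = all f (filter q s) && all f (filter (predC q) s).
  by rewrite -all_cat; apply/perm_all; rewrite perm_sym perm_filterC.
rewrite /is_homb; apply/forallP/andP => [hom_h | [/forallP hom1 /forallP hom2] R].
  split; apply/forallP => R; move: (hom_h R);
    by rewrite (all_filterC _ (fun t : (ar R).-tuple nat => p (val t))) => /andP[].
by rewrite (all_filterC _ (fun t : (ar R).-tuple nat => p (val t))) hom1 hom2.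
Qed.

Lemma hom_count_split A D p :
  (forall x, x \in adom (sub_instance A p) ->
             x \in adom (sub_instance A (predC p)) -> False) ->
  hom_count A D = hom_count (sub_instance A p) D * hom_count (sub_instance A (predC p)) D.
Proof.
move=> disj; rewrite /hom_count -(count_split (d := undup (adom A))); rewrite ?undup_uniq //.
- by apply: eq_card => g; rewrite !inE -is_homb_split.
- by move=> x; rewrite !mem_undup; apply: adom_sub_instance.
- by move=> x; rewrite !mem_undup; apply: adom_sub_instance.
- by move=> x; rewrite !mem_undup; apply: adom_sub_instance_cover.
- by move=> x; rewrite !mem_undup; apply: disj.
- by move=> h h' eq_h; apply: is_homb_ext => x xd; apply: eq_h; rewrite mem_undup.
- by move=> h h' eq_h; apply: is_homb_ext => x xd; apply: eq_h; rewrite mem_undup.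
Qed.

Lemma linked_rcons A a x y : linked A a x -> cooccur A x y -> linked A a y.
Proof.
elim=> [z | z u v zu _ IH] xy; first by apply: (linkedS xy); apply: linked0.
exact: (linkedS zu (IH xy)).
Qed.

(* The number of facts, the measure for the decomposition. *)
Definition nfacts A : nat := \sum_(R : S) size (A R).

Lemma nfacts_split A p :
  nfacts A = nfacts (sub_instance A p) + nfacts (sub_instance A (predC p)).
Proof.
rewrite /nfacts -big_split; apply: eq_bigr => R _.
rewrite /sub_instance !size_filter -(count_predC (fun t : (ar R).-tuple nat => p (val t))).
by congr (_ + _); apply: eq_count.
Qed.

Lemma nfacts_pos A R t : t \in A R -> 0 < nfacts A.
Proof. by move=> tA; rewrite /nfacts (bigD1 R) //=; case: (A R) tA. Qed.

Definition decomposition A (L : seq (instance ar)) : Prop :=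
  [/\ 0 < size L, forall B, List.In B L -> connected B
    & forall D, hom_count A D = \prod_(B <- L) hom_count B D].

(* A disconnected instance splits into two smaller parts with disjoint active
   domains: the facts reachable from some a, and the others. *)
Lemma split_disconnected A a b :
  a \in adom A -> b \in adom A -> ~ linked A a b ->
  exists p, [/\ nfacts (sub_instance A p) < nfacts A,
    nfacts (sub_instance A (predC p)) < nfacts A
    & forall x, x \in adom (sub_instance A p) ->
                x \in adom (sub_instance A (predC p)) -> False].
Proof.
move=> /mem_adom[R [t [tA at_]]] /mem_adom[R' [t' [tA' bt']]] not_ab.
pose p (s : seq nat) : bool :=
  if excluded_middle_informative (exists x, x \in s /\ linked A a x) then true else false.
have pP s : p s <-> exists x, x \in s /\ linked A a x.
  by rewrite /p; case: excluded_middle_informative.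
have pt : p (val t) by apply/pP; exists a; split=> //; apply: linked0.
have npt' : ~~ p (val t').
  apply/negP => /pP[y [yt ay]]; apply: not_ab; apply: (linked_rcons ay).
  by exists R', t'.
have pos1 : 0 < nfacts (sub_instance A p) by apply: (@nfacts_pos _ R t); rewrite mem_filter pt.
have pos2 : 0 < nfacts (sub_instance A (predC p)).
  by apply: (@nfacts_pos _ R' t'); rewrite mem_filter /= npt'.
exists p; rewrite (nfacts_split A p); split.
- by rewrite -addn1 leq_add2l.
- by rewrite -add1n leq_add2r.
- move=> x /mem_adom[R1 [t1 [t1A xt1]]] /mem_adom[R2 [t2 [t2A xt2]]].
  move: t1A t2A; rewrite !mem_filter /= => /andP[/pP[y [yt1 ay]] t1A] /andP[/negP npt2 _].
  by apply: npt2; apply/pP; exists x; split=> //; apply: (linked_rcons ay); exists R1, t1.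
Qed.

Lemma decomposition_exists A : exists L, decomposition A L.
Proof.
have [n] := ubnP (nfacts A); elim: n A => // n IH A lt_An.
case: (classic (exists a b, [/\ a \in adom A, b \in adom A & ~ linked A a b])) => [|conn].
  case=> a [b [aA bA not_ab]].
  have [p [lt1 lt2 disj]] := split_disconnected aA bA not_ab.
  have [L1 [nz1 conn1 hom1]] := IH _ (leq_trans lt1 lt_An).
  have [L2 [_ conn2 hom2]] := IH _ (leq_trans lt2 lt_An).
  exists (L1 ++ L2); split; first by rewrite size_cat ltn_addr.
    by move=> B in_B; case: (List.in_app_or _ _ _ in_B); [apply: conn1 | apply: conn2].
  by move=> D; rewrite big_cat -hom1 -hom2 (hom_count_split D disj).
exists [:: A]; split=> // [B [<- | []] a b aA bA | D]; last by rewrite big_seq1.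
by apply: NNPP => not_ab; apply: conn; exists a, b.
Qed.

Definition components A : seq (instance ar) :=
  proj1_sig (constructive_indefinite_description _ (decomposition_exists A)).

Lemma componentsP A : decomposition A (components A).
Proof. by rewrite /components; case: constructive_indefinite_description. Qed.

Definition combine (K : semiring) (l : seq nat) : nat :=
  match K with SN => \prod_(n <- l) n | SB => all (fun n => 0 < n) l end.

Lemma combine_components K A D :
  combine K [seq homK K B D | B <- components A] = homK K A D.
Proof.
have [_ _ hom_A] := componentsP A; rewrite /homK hom_A.
case: K => /=; last by rewrite big_map.
congr nat_of_bool; elim: (components A) => [|B L IH]; first by rewrite big_nil.
by rewrite big_cons /= muln_gt0 IH; case: (0 < hom_count B D).
Qed.

(* Recover the vector of values on F from the values on all components of
   the members of F, listed consecutively. *)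
Fixpoint reconstruct (K : semiring) (F : seq (instance ar)) (v : seq nat) : seq nat :=
  if F is A :: F' then
    combine K (take (size (components A)) v) :: reconstruct K F' (drop (size (components A)) v)
  else [::].

Lemma reconstructE K F D :
  reconstruct K F [seq homK K B D | B <- flatten (map components F)] = [seq homK K A D | A <- F].
Proof.
elim: F => [|A F IH] //=; rewrite map_cat.
have -> : size (components A) = size [seq homK K B D | B <- components A] by rewrite size_map.
by rewrite take_size_cat // drop_size_cat // IH combine_components.
Qed.

Lemma components_connected F B :
  List.In B (flatten (map components F)) -> connected B.
Proof.
elim: F => [|A F IH] //= in_B; case: (List.in_app_or _ _ _ in_B); last exact: IH.
by have [_ conn _] := componentsP A; apply: conn.
Qed.

Lemma size_components_flatten F : 0 < size F -> 0 < size (flatten (map components F)).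
Proof.
case: F => [|A F] //= _; have [nz _ _] := componentsP A.
by rewrite size_cat ltn_addr.
Qed.

End Instances.

Theorem mainTheorem1 (S : finType) (ar : S -> nat)
  (ar_pos : forall R : S, 0 < ar R)
  (C : instance ar -> Prop) (HC : iso_closed C) (K : semiring) :
  admits_left K C <-> admits_left_connected K C.
Proof.
split; last by case=> F [X [szF [_ alg]]]; exists F, X.
case=> F [X [szF alg]].
exists (flatten (map (@components S ar) F)), (fun v => X (reconstruct K F v)).
split; first exact: size_components_flatten.
split; first exact: components_connected.
by move=> D; rewrite alg reconstructE.
Qed.
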